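(* Let $(A,B)$ be controllable and let $H^{(i)}$ be the sequence $H^{(i+1)}=G+\gamma M(L(H^{(i)}))^\top H^{(i)} M(L(H^{(i)}))$ with $H^{(0)}=0$. Then there exists a matrix $Y$ such that $0\preceq H^{(i)}\preceq Y$ for all $i$.
   Context: Let $A\in\mathbb{R}^{n\times n}$, $B\in\mathbb{R}^{n\times m}$, $Q=Q^\top\succeq0$, $R=R^\top\succ0$, $\gamma\in[0,1)$, $N\in\mathbb{N}$. Symmetric matrices $H$ of size $((N+2)n+m)$ are partitioned into blocks $h_{ab}$, $a,b\in\{x,u,r_0,\dots,r_N\}$ (sizes $n,m,n,\dots,n$). For $H$ with invertible $h_{uu}$, $L(H)=-h_{uu}^{-1}[h_{ux},h_{ur_1},\dots,h_{ur_N}]=[L_x,L_1,\dots,L_N]$, and $L(0):=0$. $G=\begin{bmatrix}Q&0&-Q&0\\0&R&0&0\\-Q&0&Q&0\\0&0&0&0\end{bmatrix}$ (blocks $x$, $u$, $r_0$, $(r_1,\dots,r_N)$). $M(L)$ is the square matrix mapping $[x;u;r_0;\dots;r_N]$ to $[Ax+Bu;\;L_x(Ax+Bu)+L_1r_2+\dots+L_{N-1}r_N;\;r_1;\dots;r_N;\;0]$. *)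

From HB Require Import structures.
From mathcomp Require Import all_boot all_order all_algebra.
Set Implicit Arguments. Unset Strict Implicit. Unset Printing Implicit Defensive.
Import Order.TTheory GRing.Theory Num.Theory.
Local Open Scope ring_scope.

(* Dimension of the augmented state [x; u; r_0; r_1; ...; r_N]. *)
Definition dimH (n m N : nat) : nat := n + m + n + N * n.

Definition ix {n m N : nat} (i : 'I_n) : 'I_(dimH n m N) :=
  lshift (N * n) (lshift n (lshift m i)).
Definition iu {n m N : nat} (j : 'I_m) : 'I_(dimH n m N) :=
  lshift (N * n) (lshift n (rshift n j)).
Definition ir0 {n m N : nat} (i : 'I_n) : 'I_(dimH n m N) :=
  lshift (N * n) (rshift (n + m) i).
(* ir k i : i-th coordinate of block r_(k+1), k : 'I_N *)
Definition ir {n m N : nat} (k : 'I_N) (i : 'I_n) : 'I_(dimH n m N) :=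
  rshift (n + m + n) (mxvec_index k i).
(* the whole (r_1,...,r_N) block, ordered r_1, r_2, ..., r_N *)
Definition irr {n m N : nat} (p : 'I_(N * n)) : 'I_(dimH n m N) :=
  rshift (n + m + n) p.

Definition Sel {R : pzRingType} {p d : nat} (f : 'I_p -> 'I_d) : 'M[R]_(p, d) :=
  \matrix_(i, j) (f i == j)%:R.

Section Defs.
Variables (R : realFieldType) (n m N : nat).
Local Notation D := (dimH n m N).

(* selection of the block r_j (j = 0..N); r_j := 0 for j > N *)
Definition Rsel (j : nat) : 'M[R]_(n, D) :=
  if j is k.+1 then
    match (insub k : option 'I_N) with
    | Some kk => Sel (@ir n m N kk)
    | None => 0
    end
  else Sel (@ir0 n m N).

Definition h_uu (H : 'M[R]_D) : 'M[R]_m := mxsub (@iu n m N) (@iu n m N) H.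
Definition h_ux (H : 'M[R]_D) : 'M[R]_(m, n) := mxsub (@iu n m N) (@ix n m N) H.
Definition h_ur (H : 'M[R]_D) : 'M[R]_(m, N * n) := mxsub (@iu n m N) (@irr n m N) H.

(* L(H) = - h_uu^-1 [h_ux, h_ur1, ..., h_urN] = [L_x, L_1, ..., L_N];
   L(H) := 0 when h_uu is not invertible (in particular L(0) = 0 for m > 0). *)
Definition Lgain (H : 'M[R]_D) : 'M[R]_(m, n + N * n) :=
  if h_uu H \in unitmx then - (invmx (h_uu H) *m row_mx (h_ux H) (h_ur H)) else 0.

Definition Lx (L : 'M[R]_(m, n + N * n)) : 'M[R]_(m, n) := lsubmx L.
(* Lk L k = L_(k+1) *)
Definition Lk (L : 'M[R]_(m, n + N * n)) (k : 'I_N) : 'M[R]_(m, n) :=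
  \matrix_(a, i) rsubmx L a (mxvec_index k i).

Variables (A : 'M[R]_n) (B : 'M[R]_(n, m)) (Q : 'M[R]_n) (Rc : 'M[R]_m).

Definition xnext : 'M[R]_(n, D) := A *m Sel (@ix n m N) + B *m Sel (@iu n m N).

(* L_x (Ax + Bu) + L_1 r_2 + ... + L_(N-1) r_N   (+ L_N * 0) *)
Definition unext (L : 'M[R]_(m, n + N * n)) : 'M[R]_(m, D) :=
  Lx L *m xnext + \sum_(k < N) Lk L k *m Rsel k.+2.

(* M(L) : [x;u;r_0;...;r_N] |-> [Ax+Bu; L_x(Ax+Bu)+L_1 r_2+...+L_(N-1) r_N; r_1; ...; r_N; 0] *)
Definition Mmat (L : 'M[R]_(m, n + N * n)) : 'M[R]_D :=
  (Sel (@ix n m N))^T *m xnext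
  + (Sel (@iu n m N))^T *m unext L
  + \sum_(j < N.+1) (Rsel j)^T *m Rsel j.+1.

(* G = [Q 0 -Q 0; 0 R 0 0; -Q 0 Q 0; 0 0 0 0] *)
Definition Gmat : 'M[R]_D :=
  (Sel (@ix n m N))^T *m Q *m Sel (@ix n m N)
  - (Sel (@ix n m N))^T *m Q *m Sel (@ir0 n m N)
  - (Sel (@ir0 n m N))^T *m Q *m Sel (@ix n m N)
  + (Sel (@ir0 n m N))^T *m Q *m Sel (@ir0 n m N)
  + (Sel (@iu n m N))^T *m Rc *m Sel (@iu n m N).

Fixpoint Hseq (gamma : R) (i : nat) : 'M[R]_D :=
  if i is i'.+1 then
    let H := Hseq gamma i' in
    Gmat + gamma *: ((Mmat (Lgain H))^T *m H *m Mmat (Lgain H))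
  else 0.

End Defs.

Definition psd {R : realFieldType} {d : nat} (X : 'M[R]_d) : Prop :=
  forall v : 'cV[R]_d, 0 <= (v^T *m X *m v) ord0 ord0.
Definition pd {R : realFieldType} {d : nat} (X : 'M[R]_d) : Prop :=
  forall v : 'cV[R]_d, v != 0 -> 0 < (v^T *m X *m v) ord0 ord0.
Definition loewner_le {R : realFieldType} {d : nat} (X Y : 'M[R]_d) : Prop :=
  psd (Y - X).

(* controllability matrix [B, AB, ..., A^(n-1) B] : column k*m+j is column j of A^k B *)
Definition ctrb {R : realFieldType} {n m : nat} (A : 'M[R]_n) (B : 'M[R]_(n, m))
  : 'M[R]_(n, n * m) :=
  \matrix_(i < n) mxvec (\matrix_(k < n, j < m) (A ^+ k *m B) i j).
Definition controllable {R : realFieldType} {n m : nat} (A : 'M[R]_n) (B : 'M[R]_(n, m))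
  : Prop := \rank (ctrb A B) = n.

(* Since M(L) never reads r_0 and G couples u only with itself, through R > 0,
   every iterate H = H^(i) is symmetric, positive semidefinite, has h_(u r_0) = 0
   and is either 0 or has an invertible block h_uu.  For such H the gain L(H)
   zeroes the u-rows of H M(L(H)), so by Pythagoras z'^T H z' is smallest at
   z' = M(L(H)) z among all successors M(0) z + (0, u, 0) with a free input u.
   Unrolling the recursion, z^T H^(i) z is at most the discounted G-cost of any
   open-loop trajectory of the augmented system started at z.  Controllability
   gives a deadbeat input that sends x to 0 in n + 1 steps, while the reference
   shift register is empty after N + 1 steps; the cost of that trajectory is a
   finite sum Y of quadratic forms in z, independent of i. *)

From HB Require Import structures.
From mathcomp Require Import all_boot all_order all_algebra.
From mathcomp Require Import zify.
Set Implicit Arguments. Unset Strict Implicit. Unset Printing Implicit Defensive.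
Import Order.TTheory GRing.Theory Num.Theory.
Local Open Scope ring_scope.

Section Selection.
Variable R : pzRingType.

Lemma Sel_mulmx p d q (f : 'I_p -> 'I_d) (X : 'M[R]_(d, q)) :
  Sel f *m X = \matrix_(i, j) X (f i) j.
Proof.
apply/matrixP => i j; rewrite !mxE (bigD1 (f i)) //= big1 => [|k /negPf nk].
  by rewrite !mxE eqxx mul1r addr0.
by rewrite !mxE eq_sym nk mul0r.
Qed.

Lemma mulmx_trSel p d q (f : 'I_p -> 'I_d) (X : 'M[R]_(q, d)) :
  X *m (Sel f)^T = \matrix_(i, j) X i (f j).
Proof.
apply/matrixP => i j; rewrite !mxE (bigD1 (f j)) //= big1 => [|k /negPf nk].
  by rewrite !mxE eqxx mulr1 addr0.
by rewrite !mxE eq_sym nk mulr0.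
Qed.

Lemma Sel_mul_trSel p q d (f : 'I_p -> 'I_d) (g : 'I_q -> 'I_d) :
  Sel f *m (Sel g)^T = \matrix_(i, j) (f i == g j)%:R :> 'M[R]_(p, q).
Proof. by rewrite Sel_mulmx; apply/matrixP => i j; rewrite !mxE eq_sym. Qed.

Lemma Sel_mul_trSel_disjoint p q d (f : 'I_p -> 'I_d) (g : 'I_q -> 'I_d) :
  (forall i j, f i != g j) -> Sel f *m (Sel g)^T = 0 :> 'M[R]_(p, q).
Proof.
by move=> fg; rewrite Sel_mul_trSel; apply/matrixP => i j; rewrite !mxE (negPf (fg i j)).
Qed.

Lemma Sel_mul_trSel_inj p d (f : 'I_p -> 'I_d) :
  injective f -> Sel f *m (Sel f)^T = 1%:M :> 'M[R]_p.
Proof.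
by move=> f_inj; rewrite Sel_mul_trSel; apply/matrixP => i j; rewrite !mxE (inj_eq f_inj).
Qed.

Lemma mxsub_Sel p q d (f : 'I_p -> 'I_d) (g : 'I_q -> 'I_d) (X : 'M[R]_d) :
  mxsub f g X = Sel f *m X *m (Sel g)^T.
Proof. by rewrite mulmx_trSel Sel_mulmx; apply/matrixP => i j; rewrite !mxE. Qed.

End Selection.

Lemma mxvec_index_eq m n (i i' : 'I_m) (j j' : 'I_n) :
  (mxvec_index i j == mxvec_index i' j') = (i == i') && (j == j').
Proof.
by rewrite /mxvec_index (inj_eq (@cast_ord_inj _ _ _)) (inj_eq (@enum_rank_inj _)).
Qed.

Section Trajectory.
Variables (R : pzRingType) (n m : nat) (A : 'M[R]_n) (B : 'M[R]_(n, m)).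

Fixpoint traj_mx (K : nat -> 'M[R]_(m, n)) t : 'M[R]_n :=
  if t is t'.+1 then A *m traj_mx K t' + B *m K t' else 1%:M.

Lemma traj_mxE K t :
  traj_mx K t = A ^+ t + \sum_(s < t) A ^+ (t - s.+1) *m B *m K s.
Proof.
elim: t => [|t IH] /=; first by rewrite big_ord0 addr0.
rewrite IH mulmxDr mulmx_sumr big_ord_recr /= subnn mul1mx addrA; congr (_ + _).
rewrite [A ^+ t.+1]exprS mulmxE; congr (_ + _); apply: eq_bigr => s _.
by rewrite (subSn (ltn_ord s)) exprS -!mulmxE !mulmxA.
Qed.

End Trajectory.

Section Deadbeat.
Variables (R : realFieldType) (n m : nat) (A : 'M[R]_n) (B : 'M[R]_(n, m)).
Local Notation SV j := (Sel (mxvec_index j) : 'M[R]_(m, n * m)).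

Lemma ctrb_sum : ctrb A B = \sum_(j < n) A ^+ j *m B *m SV j.
Proof.
apply/matrixP => i p; case/mxvec_indexP: p => k a.
rewrite mxE mxvecE mxE summxE (bigD1 k) //= big1 ?addr0 => [|j /negPf jk].
  rewrite [RHS]mxE (bigD1 a) //= big1 => [|b /negPf ba].
    by rewrite !mxE !eqxx mulr1 addr0.
  by rewrite !mxE mxvec_index_eq eqxx ba mulr0.
rewrite mxE big1 // => b _.
by rewrite !mxE mxvec_index_eq jk mulr0.
Qed.

Lemma controllable_deadbeat : controllable A B ->
  exists K : nat -> 'M[R]_(m, n),
    forall t, (n <= t)%N -> K t = 0 /\ traj_mx A B K t = 0.
Proof.
move=> ctrl; have /row_fullP[P ctrbP] : row_full (ctrb A B)^T.
  by rewrite /row_full mxrank_tr ctrl.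
have {}ctrbP : ctrb A B *m P^T = 1%:M.
  by rewrite -[ctrb A B]trmxK -trmx_mul ctrbP trmx1.
(* With P^T a right inverse of ctrb A B, these inputs make
   \sum_(s < n) A ^+ (n - s.+1) *m B *m K s = - A ^+ n. *)
pose K s := if insub s is Some s' then SV (rev_ord s') *m P^T *m - A ^+ n else 0.
have K_ge t : (n <= t)%N -> K t = 0 by move=> nt; rewrite /K insubF // ltnNge nt.
have traj_n : traj_mx A B K n = 0.
  rewrite traj_mxE (reindex_inj rev_ord_inj).
  under eq_bigr => j _ do
    rewrite /K valK rev_ordK -[(n - _.+1)%N]/(val (rev_ord (rev_ord j))) rev_ordK !mulmxA.
  by rewrite -!mulmx_suml -ctrb_sum ctrbP mul1mx addrN.
exists K => t nt; split; first exact: K_ge.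
rewrite -(subnKC nt); elim: (t - n)%N => [|k IH]; first by rewrite addn0.
by rewrite addnS /= IH K_ge ?leq_addr // !mulmx0 addr0.
Qed.
End Deadbeat.

Section QuadraticForm.
Variable R : comPzRingType.

Definition qf d (X : 'M[R]_d) (v : 'cV[R]_d) : R := (v^T *m X *m v) ord0 ord0.

Lemma qfD d (X Y : 'M[R]_d) v : qf (X + Y) v = qf X v + qf Y v.
Proof. by rewrite /qf mulmxDr mulmxDl mxE. Qed.

Lemma qfB d (X Y : 'M[R]_d) v : qf (X - Y) v = qf X v - qf Y v.
Proof. by rewrite /qf mulmxBr mulmxBl !mxE. Qed.

Lemma qfZ d c (X : 'M[R]_d) v : qf (c *: X) v = c * qf X v.
Proof. by rewrite /qf -scalemxAr -scalemxAl mxE. Qed.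

Lemma qf0 d (v : 'cV[R]_d) : qf 0 v = 0.
Proof. by rewrite /qf mulmx0 mul0mx mxE. Qed.

Lemma qf_sum d (T : nat) (X : 'I_T -> 'M[R]_d) v :
  qf (\sum_(t < T) X t) v = \sum_(t < T) qf (X t) v.
Proof. by rewrite /qf mulmx_sumr mulmx_suml summxE. Qed.

Lemma qf_congr d p (X : 'M[R]_p) (M : 'M[R]_(p, d)) v :
  qf (M^T *m X *m M) v = qf X (M *m v).
Proof. by rewrite /qf trmx_mul !mulmxA. Qed.

End QuadraticForm.

Section Definiteness.
Variable R : realFieldType.

Lemma pd_psd d (X : 'M[R]_d) : pd X -> psd X.
Proof.
move=> X_pd v; have [->|v_neq0] := eqVneq v 0; first by rewrite mulmx0 mxE.
exact/ltW/X_pd.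
Qed.

Lemma pd_unitmx d (X : 'M[R]_d) : pd X -> X \in unitmx.
Proof.
move=> X_pd; rewrite unitmxE unitfE; apply/negP => /det0P[v v_neq0 vX].
have := X_pd v^T; rewrite trmx_eq0 trmxK vX mul0mx mxE ltxx.
by move/(_ v_neq0).
Qed.

End Definiteness.

Lemma ler_sum_support (R : numDomainType) (f : nat -> R) T i :
  (forall t, 0 <= f t) -> (forall t, (T <= t)%N -> f t = 0) ->
  \sum_(t < i) f t <= \sum_(t < T) f t.
Proof.
move=> f_ge0 f_supp; rewrite -!(big_mkord xpredT).
have [iT|Ti] := leqP i T.
  by rewrite (big_cat_nat (leq0n i) iT) /= lerDl sumr_ge0.
rewrite (big_cat_nat (leq0n T) (ltnW Ti)) /= [X in _ + X <= _]big1_seq ?addr0 //.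
by move=> t; rewrite mem_index_iota => /andP[_ /andP[Tt _]]; apply: f_supp.
Qed.

Section AugmentedState.
Variables (R : realFieldType) (n m N : nat).
Local Notation D := (dimH n m N).
Local Notation Sx := (Sel (@ix n m N) : 'M[R]_(n, D)).
Local Notation Su := (Sel (@iu n m N) : 'M[R]_(m, D)).
Local Notation S0 := (Sel (@ir0 n m N) : 'M[R]_(n, D)).
Local Notation Sr k := (Sel (@ir n m N k) : 'M[R]_(n, D)).
Local Notation RS j := (Rsel R n m N j).

Ltac disjoint_blocks :=
  let i := fresh "i" in let j := fresh "j" in
  apply: Sel_mul_trSel_disjoint => i j; rewrite -val_eqE /=; apply/eqP;
  move: (ltn_ord i) (ltn_ord j); lia.

Lemma Sx_trSu : Sx *m Su^T = 0. Proof. by disjoint_blocks. Qed.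
Lemma Su_trSx : Su *m Sx^T = 0. Proof. by disjoint_blocks. Qed.
Lemma Sx_trS0 : Sx *m S0^T = 0. Proof. by disjoint_blocks. Qed.
Lemma S0_trSx : S0 *m Sx^T = 0. Proof. by disjoint_blocks. Qed.
Lemma Su_trS0 : Su *m S0^T = 0. Proof. by disjoint_blocks. Qed.
Lemma S0_trSu : S0 *m Su^T = 0. Proof. by disjoint_blocks. Qed.
Lemma Sx_trSr k : Sx *m (Sr k)^T = 0. Proof. by disjoint_blocks. Qed.
Lemma Sr_trSx k : Sr k *m Sx^T = 0. Proof. by disjoint_blocks. Qed.
Lemma Su_trSr k : Su *m (Sr k)^T = 0. Proof. by disjoint_blocks. Qed.
Lemma Sr_trSu k : Sr k *m Su^T = 0. Proof. by disjoint_blocks. Qed.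
Lemma S0_trSr k : S0 *m (Sr k)^T = 0. Proof. by disjoint_blocks. Qed.
Lemma Sr_trS0 k : Sr k *m S0^T = 0. Proof. by disjoint_blocks. Qed.

Lemma Sx_trSx : Sx *m Sx^T = 1%:M.
Proof. by apply: Sel_mul_trSel_inj => i j /(congr1 val) /= /val_inj. Qed.
Lemma Su_trSu : Su *m Su^T = 1%:M.
Proof. by apply: Sel_mul_trSel_inj => i j /(congr1 val) /= /addnI /val_inj. Qed.
Lemma S0_trS0 : S0 *m S0^T = 1%:M.
Proof. by apply: Sel_mul_trSel_inj => i j /(congr1 val) /= /addnI /val_inj. Qed.

Lemma Sr_trSr k k' : Sr k *m (Sr k')^T = if k == k' then 1%:M else 0.
Proof.
rewrite Sel_mul_trSel; apply/matrixP => i j.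
rewrite mxE /ir (inj_eq (@rshift_inj _ _)) mxvec_index_eq.
by case: eqP; rewrite !mxE.
Qed.

Variant Rsel_spec (j : nat) : 'M[R]_(n, D) -> Prop :=
  | Rsel_r0 of j = 0%N : Rsel_spec j S0
  | Rsel_r (k : 'I_N) of j = k.+1 : Rsel_spec j (Sr k)
  | Rsel_out of (N < j)%N : Rsel_spec j 0.

Lemma RselP j : Rsel_spec j (RS j).
Proof.
case: j => [|k]; first exact: Rsel_r0.
rewrite /Rsel; case: insubP => [k' _ <-|]; first exact: Rsel_r.
by rewrite -leqNgt => Nk; apply: Rsel_out.
Qed.

Lemma Rsel_ord (k : 'I_N) : RS k.+1 = Sr k.
Proof. by rewrite /Rsel valK. Qed.

Lemma Rsel_out_range j : (N < j)%N -> RS j = 0.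
Proof. by case: RselP => // [->|k ->] //; rewrite ltnS leqNgt ltn_ord. Qed.

Lemma Sx_trRsel j : Sx *m (RS j)^T = 0.
Proof. by case: RselP => *; rewrite ?Sx_trS0 ?Sx_trSr ?trmx0 ?mulmx0. Qed.
Lemma Su_trRsel j : Su *m (RS j)^T = 0.
Proof. by case: RselP => *; rewrite ?Su_trS0 ?Su_trSr ?trmx0 ?mulmx0. Qed.
Lemma Rsel_trSx j : RS j *m Sx^T = 0.
Proof. by case: RselP => *; rewrite ?S0_trSx ?Sr_trSx ?mul0mx. Qed.
Lemma Rsel_trSu j : RS j *m Su^T = 0.
Proof. by case: RselP => *; rewrite ?S0_trSu ?Sr_trSu ?mul0mx. Qed.
Lemma RselS_trS0 j : RS j.+1 *m S0^T = 0.
Proof. by case: RselP => // *; rewrite ?Sr_trS0 ?mul0mx. Qed.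

Lemma Rsel_trRsel j j' :
  RS j *m (RS j')^T = if (j == j') && (j <= N)%N then 1%:M else 0.
Proof.
case: RselP => [->|k ->|Nj]; case: RselP => [->|k' ->|Nj'];
  rewrite ?S0_trS0 ?S0_trSr ?Sr_trS0 ?Sr_trSr ?trmx0 ?mulmx0 ?mul0mx //=.
- by case: ifP => // /andP[/eqP E]; move: Nj'; rewrite -E.
- by rewrite eqSS ltn_ord andbT -val_eqE.
- by case: ifP => // /andP[/eqP E]; move: Nj'; rewrite -E ltnNge ltn_ord.
all: by case: ifP => // /andP[_]; rewrite leqNgt Nj.
Qed.

Variables (A : 'M[R]_n) (B : 'M[R]_(n, m)).
Local Notation xn := (xnext N A B).
Local Notation L0 := (0 : 'M[R]_(m, n + N * n)).
Local Notation M0 := (Mmat A B L0).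

Lemma unext0 : unext A B L0 = 0.
Proof.
have Lx0 : Lx L0 = 0 by apply/matrixP => i j; rewrite !mxE.
have Lk0 k : Lk L0 k = 0 by apply/matrixP => i j; rewrite !mxE.
by rewrite /unext Lx0 mul0mx add0r big1 // => k _; rewrite Lk0 mul0mx.
Qed.

Lemma Mmat_unext L : Mmat A B L = M0 + Su^T *m unext A B L.
Proof. by rewrite /Mmat unext0 mulmx0 addr0 addrAC. Qed.

Lemma M0E : M0 = Sx^T *m xn + \sum_(j < N.+1) (RS j)^T *m RS j.+1.
Proof. by rewrite /Mmat unext0 mulmx0 addr0. Qed.

Lemma Sx_M0 : Sx *m M0 = xn.
Proof.
rewrite M0E mulmxDr mulmxA Sx_trSx mul1mx mulmx_sumr big1 ?addr0 // => j _.
by rewrite mulmxA Sx_trRsel mul0mx.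
Qed.

Lemma Su_M0 : Su *m M0 = 0.
Proof.
rewrite M0E mulmxDr mulmxA Su_trSx mul0mx add0r mulmx_sumr big1 // => j _.
by rewrite mulmxA Su_trRsel mul0mx.
Qed.

Lemma Rsel_M0 j : RS j *m M0 = RS j.+1.
Proof.
rewrite M0E mulmxDr mulmxA Rsel_trSx mul0mx add0r mulmx_sumr.
under eq_bigr do rewrite mulmxA Rsel_trRsel.
have [jN|Nj] := leqP j N; last first.
  by rewrite (@Rsel_out_range j.+1 (ltnW Nj)) big1 // => k _; rewrite andbF mul0mx.
rewrite (bigD1 (Ordinal (jN : (j < N.+1)%N))) //= eqxx mul1mx big1 ?addr0 // => k.
by rewrite andbT -val_eqE /= eq_sym => /negPf ->; rewrite mul0mx.
Qed.

Lemma Mmat_trS0 L : Mmat A B L *m S0^T = 0.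
Proof.
have xn_trS0 : xn *m S0^T = 0.
  by rewrite /xnext mulmxDl -!mulmxA Sx_trS0 Su_trS0 !mulmx0 addr0.
have unext_trS0 : unext A B L *m S0^T = 0.
  rewrite /unext mulmxDl -mulmxA xn_trS0 mulmx0 add0r mulmx_suml big1 // => k _.
  by rewrite -mulmxA RselS_trS0 mulmx0.
rewrite /Mmat !mulmxDl -!mulmxA xn_trS0 unext_trS0 !mulmx0 !add0r mulmx_suml big1 //.
by move=> j _; rewrite -mulmxA RselS_trS0 mulmx0.
Qed.

Lemma Su_H_M0 (H : 'M[R]_D) : Su *m H *m S0^T = 0 ->
  Su *m H *m M0 = h_ux H *m xn + \sum_(k < N) Su *m H *m (Sr k)^T *m RS k.+2.
Proof.
move=> HuS0; rewrite M0E mulmxDr mulmxA /h_ux mxsub_Sel.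
congr (_ + _); rewrite mulmx_sumr big_ord_recl mulmxA HuS0 mul0mx add0r.
by apply: eq_bigr => k _; rewrite mulmxA lift0 Rsel_ord.
Qed.

Lemma h_uu_unext_gain (H : 'M[R]_D) : h_uu H \in unitmx ->
  h_uu H *m unext A B (Lgain H) =
  - (h_ux H *m xn + \sum_(k < N) Su *m H *m (Sr k)^T *m RS k.+2).
Proof.
move=> Huu; rewrite /unext /Lgain Huu mulmxDr mulmx_sumr opprD -sumrN.
have Lx_gain : Lx (- (invmx (h_uu H) *m row_mx (h_ux H) (h_ur H))) =
    - (invmx (h_uu H) *m h_ux H).
  by rewrite /Lx mul_mx_row opp_row_mx row_mxKl.
have Lk_gain k : Lk (- (invmx (h_uu H) *m row_mx (h_ux H) (h_ur H))) k =
    - (invmx (h_uu H) *m (Su *m H *m (Sr k)^T)).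
  rewrite -mxsub_Sel /Lk mul_mx_row opp_row_mx row_mxKr.
  apply/matrixP => a i; rewrite !mxE; congr (- _); apply: eq_bigr => b _.
  by rewrite !mxE.
rewrite Lx_gain mulmxA mulmxN mulmxA (mulmxV Huu) mul1mx mulNmx; congr (_ + _).
apply: eq_bigr => k _.
by rewrite Lk_gain mulmxA mulmxN mulmxA (mulmxV Huu) mul1mx !mulNmx.
Qed.

Lemma Su_H_Mgain (H : 'M[R]_D) : Su *m H *m S0^T = 0 -> h_uu H \in unitmx ->
  Su *m H *m Mmat A B (Lgain H) = 0.
Proof.
move=> HuS0 Huu; rewrite Mmat_unext mulmxDr mulmxA.
have -> : Su *m H *m Su^T = h_uu H by rewrite /h_uu mxsub_Sel.
by rewrite h_uu_unext_gain // Su_H_M0 // subrr.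
Qed.

Definition admissible (H : 'M[R]_D) : Prop :=
  [/\ H^T = H, psd H, Su *m H *m S0^T = 0 & H = 0 \/ h_uu H \in unitmx].

(* Pythagoras: the cross terms vanish by [Su_H_Mgain]. *)
Lemma qf_Mgain_le (H : 'M[R]_D) z d : admissible H ->
  qf H (Mmat A B (Lgain H) *m z) <= qf H (M0 *m z + Su^T *m d).
Proof.
case=> HT H_psd HuS0 [->|Huu]; first by rewrite !qf0.
set v := Mmat A B (Lgain H) *m z.
have Huv : Su *m H *m v = 0 by rewrite /v mulmxA Su_H_Mgain // mul0mx.
have -> : M0 *m z + Su^T *m d = v + Su^T *m (d - unext A B (Lgain H) *m z).
  rewrite /v (Mmat_unext (Lgain H)) [in RHS]mulmxDl -[in RHS]mulmxA mulmxBr.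
  by rewrite addrACA subrr addr0.
move: (d - _) => e; clearbody v.
have cross1 : (Su^T *m e)^T *m H *m v = 0.
  by rewrite trmx_mul trmxK -!mulmxA (mulmxA Su) Huv mulmx0.
have cross2 : v^T *m H *m (Su^T *m e) = 0.
  have vHSu : v^T *m H *m Su^T = 0.
    by apply: trmx_inj; rewrite !trmx_mul !trmxK HT mulmxA Huv trmx0.
  by rewrite mulmxA vHSu mul0mx.
rewrite /qf [(v + _)^T]linearD /= !mulmxDl !mulmxDr cross1 cross2 addr0 add0r.
by rewrite [X in _ <= X]mxE lerDl; apply: H_psd.
Qed.

Variables (Q : 'M[R]_n) (Rc : 'M[R]_m).
Hypotheses (QT : Q^T = Q) (Q_psd : psd Q) (RcT : Rc^T = Rc) (Rc_pd : pd Rc).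
Local Notation G := (Gmat N Q Rc).

Lemma GmatE : G = (Sx - S0)^T *m Q *m (Sx - S0) + Su^T *m Rc *m Su.
Proof.
rewrite /Gmat (linearB trmx) !mulmxBl !mulmxBr opprB; congr (_ + _).
by rewrite !addrA addrAC.
Qed.

Lemma Gmat_sym : G^T = G.
Proof. by rewrite GmatE linearD /= !trmx_mul !trmxK QT RcT !mulmxA. Qed.

Lemma Gmat_psd : psd G.
Proof.
move=> v; rewrite -/(qf G v) GmatE qfD !qf_congr.
by rewrite addr_ge0 //; [apply: Q_psd | apply: pd_psd].
Qed.

Lemma Su_G_trS0 : Su *m G *m S0^T = 0.
Proof.
have Su_trSxS0 : Su *m (Sx - S0)^T = 0.
  by rewrite (linearB trmx) mulmxBr Su_trSx Su_trS0 subrr.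
rewrite GmatE mulmxDr mulmxDl !mulmxA Su_trSxS0 -!mulmxA Su_trS0.
by rewrite !mulmx0 mul0mx addr0.
Qed.

Lemma Su_G_trSu : Su *m G *m Su^T = Rc.
Proof.
have SxS0_trSu : (Sx - S0) *m Su^T = 0 by rewrite mulmxBl Sx_trSu S0_trSu subrr.
rewrite GmatE mulmxDr mulmxDl -!mulmxA SxS0_trSu !mulmx0 add0r.
by rewrite Su_trSu mulmx1 !mulmxA Su_trSu mul1mx.
Qed.

Variable gamma : R.
Hypothesis gamma_ge0 : 0 <= gamma.
Local Notation Hs i := (Hseq N A B Q Rc gamma i).

Lemma Hseq_admissible i : admissible (Hs i).
Proof.
elim: i => [|i [HT H_psd HuS0 _]] /=.
  split; [exact: trmx0 | | by rewrite mulmx0 mul0mx | by left].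
  by move=> v; rewrite mulmx0 mul0mx mxE.
set M := Mmat A B (Lgain (Hs i)).
split.
- by rewrite linearD linearZ /= Gmat_sym !trmx_mul trmxK HT !mulmxA.
- move=> v; rewrite -/(qf _ v) qfD qfZ qf_congr addr_ge0 //; first exact: Gmat_psd.
  by rewrite mulr_ge0 //; apply: H_psd.
- rewrite mulmxDr mulmxDl Su_G_trS0 add0r -scalemxAr -scalemxAl -!mulmxA.
  by rewrite /M Mmat_trS0 !mulmx0 scaler0.
right; apply: pd_unitmx => d d_neq0.
have qfG_Su : qf G (Su^T *m d) = qf Rc d by rewrite -qf_congr trmxK Su_G_trSu.
rewrite -/(qf _ d) /h_uu mxsub_Sel -[Su in Su *m _ *m _]trmxK qf_congr qfD qfZ qfG_Su.
by rewrite (lt_le_trans (Rc_pd d_neq0)) // lerDl mulr_ge0 // qf_congr; apply: H_psd.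
Qed.

Lemma qf_Hseq_le i (w : nat -> 'cV[R]_D) (d : nat -> 'cV[R]_m) :
  (forall t, w t.+1 = M0 *m w t + Su^T *m d t) ->
  qf (Hs i) (w 0%N) <= \sum_(t < i) gamma ^+ t * qf G (w t).
Proof.
elim: i w d => [|i IH] w d w_traj; first by rewrite big_ord0 qf0.
rewrite big_ord_recl expr0 mul1r /= qfD qfZ qf_congr lerD2l.
under eq_bigr do rewrite exprS -mulrA.
rewrite -mulr_sumr ler_wpM2l //.
apply: le_trans (IH (fun t => w t.+1) (fun t => d t.+1) (fun t => w_traj t.+1)).
by rewrite w_traj; apply: qf_Mgain_le; apply: Hseq_admissible.
Qed.

Variable K : nat -> 'M[R]_(m, n).
Hypothesis K_deadbeat : forall t, (n <= t)%N -> K t = 0 /\ traj_mx A B K t = 0.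

Fixpoint deadbeat_mx t : 'M[R]_D :=
  if t is t'.+1 then M0 *m deadbeat_mx t' + Su^T *m (K t' *m xn) else 1%:M.
Local Notation W := deadbeat_mx.

Lemma Su_deadbeat t : Su *m W t.+1 = K t *m xn.
Proof. by rewrite /= mulmxDr !mulmxA Su_M0 Su_trSu mul0mx mul1mx add0r. Qed.

Lemma Sx_deadbeat t : Sx *m W t.+1 = traj_mx A B K t *m xn.
Proof.
have Sx_WS s : Sx *m W s.+1 = xn *m W s.
  by rewrite /= mulmxDr !mulmxA Sx_M0 Sx_trSu !mul0mx addr0.
elim: t => [|t IH]; first by rewrite Sx_WS mulmx1 mul1mx.
rewrite Sx_WS /xnext mulmxDl -!mulmxA IH Su_deadbeat /=.
by rewrite mulmxDl !mulmxA.
Qed.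

Lemma Rsel_deadbeat j t : RS j *m W t = RS (j + t).
Proof.
elim: t j => [|t IH] j; first by rewrite mulmx1 addn0.
by rewrite /= mulmxDr !mulmxA Rsel_M0 Rsel_trSu !mul0mx addr0 IH addSnnS.
Qed.

Lemma deadbeat_cost_eq0 t : (n + N < t)%N -> (W t)^T *m G *m W t = 0.
Proof.
case: t => // t; rewrite ltnS => nNt.
have [K_t traj_t] := K_deadbeat (leq_trans (leq_addr N n) nNt).
have S0_W : S0 *m W t.+1 = 0.
  by rewrite -[S0]/(RS 0%N) Rsel_deadbeat Rsel_out_range // ltnS (leq_trans (leq_addl n N)).
have SxS0_W : (Sx - S0) *m W t.+1 = 0.
  by rewrite mulmxBl Sx_deadbeat traj_t S0_W mul0mx subrr.
rewrite GmatE mulmxDr mulmxDl -!mulmxA SxS0_W Su_deadbeat K_t.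
by rewrite !mul0mx !mulmx0 addr0.
Qed.

Definition cost_bound : 'M[R]_D :=
  \sum_(t < (n + N).+1) gamma ^+ t *: ((W t)^T *m G *m W t).

Lemma cost_bound_sym : cost_bound^T = cost_bound.
Proof.
rewrite /cost_bound linear_sum; apply: eq_bigr => t _.
by rewrite linearZ /= !trmx_mul trmxK Gmat_sym mulmxA.
Qed.

Lemma Hseq_le_cost_bound i : loewner_le (Hs i) cost_bound.
Proof.
move=> z; rewrite -/(qf _ z) qfB qf_sum subr_ge0.
have W_traj t : W t.+1 *m z = M0 *m (W t *m z) + Su^T *m (K t *m xn *m z).
  by rewrite mulmxDl !mulmxA.
have := qf_Hseq_le i (w := fun t => W t *m z) W_traj; rewrite mul1mx => /le_trans; apply.
under [leRHS]eq_bigr do rewrite qfZ qf_congr.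
apply: (ler_sum_support (f := fun t => gamma ^+ t * qf G (W t *m z))) => [t|t nNt].
  by rewrite mulr_ge0 ?exprn_ge0 //; apply: Gmat_psd.
by rewrite -qf_congr deadbeat_cost_eq0 ?qf0 ?mulr0.
Qed.

End AugmentedState.

Unset Implicit Arguments.

Theorem lemma7 (R : realFieldType) (n m N : nat)
  (A : 'M[R]_n) (B : 'M[R]_(n, m)) (Q : 'M[R]_n) (Rc : 'M[R]_m) (gamma : R) :
  Q^T = Q -> psd Q ->
  Rc^T = Rc -> pd Rc ->
  0 <= gamma -> gamma < 1 ->
  controllable A B ->
  exists Y : 'M[R]_(dimH n m N),
    Y^T = Y /\
    forall i : nat,
      loewner_le 0 (Hseq N A B Q Rc gamma i) /\
      loewner_le (Hseq N A B Q Rc gamma i) Y.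
Proof.
move=> QT Q_psd RcT Rc_pd gamma_ge0 _ ctrl.
have [K K_deadbeat] := controllable_deadbeat ctrl.
exists (cost_bound N A B Q Rc gamma K); split; first exact: cost_bound_sym.
move=> i; split; last exact: Hseq_le_cost_bound.
by rewrite /loewner_le subr0; have [] := Hseq_admissible N A B QT Q_psd RcT Rc_pd gamma_ge0 i.
Qed.
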